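(* Let $R$ be a ring with identity and let $e$ be an idempotent of $R$. If $R$ is SSP, then the ring $eRe$ (with identity $e$) is also SSP.
   Context: Rings are associative with identity. A ring $S$ is right SSP if the sum of any two direct summands of the right module $S_S$ is again a direct summand of $S_S$; left SSP is defined analogously with ${}_SS$; $S$ is SSP if it is both right and left SSP. (Right SSP and left SSP are equivalent conditions.) *)

From HB Require Import structures.
From mathcomp Require Import all_boot all_algebra.
Set Implicit Arguments.
Unset Strict Implicit.
Unset Printing Implicit Defensive.
Import GRing.Theory.
Local Open Scope ring_scope.

Section SSP.
Variable S : pzRingType.

Definition right_submodule (A : S -> Prop) : Prop :=
  [/\ A 0, (forall x y, A x -> A y -> A (x + y)) & (forall x s, A x -> A (x * s))].

Definition left_submodule (A : S -> Prop) : Prop :=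
  [/\ A 0, (forall x y, A x -> A y -> A (x + y)) & (forall x s, A x -> A (s * x))].

Definition sum_sub (A B : S -> Prop) : S -> Prop :=
  fun z => exists a b, [/\ A a, B b & z = a + b].

Definition right_summand (A : S -> Prop) : Prop :=
  right_submodule A /\
  exists C : S -> Prop, [/\ right_submodule C,
    (forall z, sum_sub A C z) & (forall z, A z -> C z -> z = 0)].

Definition left_summand (A : S -> Prop) : Prop :=
  left_submodule A /\
  exists C : S -> Prop, [/\ left_submodule C,
    (forall z, sum_sub A C z) & (forall z, A z -> C z -> z = 0)].

Definition right_SSP : Prop :=
  forall A B, right_summand A -> right_summand B -> right_summand (sum_sub A B).

Definition left_SSP : Prop :=
  forall A B, left_summand A -> left_summand B -> left_summand (sum_sub A B).

Definition SSP : Prop := right_SSP /\ left_SSP.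
End SSP.

Section Corner.
Variables (R : pzRingType) (e : R) (he : e * e = e).

(* the dependency on the idempotence proof makes the ring structure
   canonical on [corner he] *)
Definition eRe of e * e = e := {x : R | e * x * e == x}.
Local Notation corner := (eRe he).
HB.instance Definition _ := [Choice of corner by <:].

Lemma corner_key (x : R) : e * (e * x * e) * e == e * x * e.
Proof. by rewrite !mulrA he -mulrA he. Qed.

Definition cproj (x : R) : corner := exist _ (e * x * e) (corner_key x).

Definition czero : corner := cproj 0.
Definition copp (x : corner) : corner := cproj (- val x).
Definition cadd (x y : corner) : corner := cproj (val x + val y).
Definition cone : corner := cproj 1.
Definition cmul (x y : corner) : corner := cproj (val x * val y).

Lemma cprojK (x : corner) : cproj (val x) = x.
Proof. by apply: val_inj; case: x => x /= /eqP. Qed.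

Lemma cval_proj x : val (cproj x) = e * x * e. Proof. by []. Qed.

Lemma cval_id (x : corner) : e * val x * e = val x.
Proof. by case: x => x /= /eqP. Qed.

Lemma cvalD (x y : corner) : e * (val x + val y) * e = val x + val y.
Proof. by rewrite mulrDr mulrDl !cval_id. Qed.

Lemma caddE (x y : corner) : val (cadd x y) = val x + val y.
Proof. exact: cvalD. Qed.

Lemma caddA : associative cadd.
Proof. by move=> x y z; apply: val_inj; rewrite !caddE addrA. Qed.
Lemma caddC : commutative cadd.
Proof. by move=> x y; apply: val_inj; rewrite /= addrC. Qed.
Lemma cadd0 : left_id czero cadd.
Proof.
move=> x; apply: val_inj; rewrite caddE cval_proj mulr0 mul0r add0r.
by [].
Qed.
Lemma caddN : left_inverse czero copp cadd.
Proof.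
move=> x; apply: val_inj; rewrite caddE.
have -> : val (copp x) = - val x by rewrite cval_proj mulrN mulNr cval_id.
by rewrite addNr cval_proj mulr0 mul0r.
Qed.

HB.instance Definition _ := GRing.isZmodule.Build corner caddA caddC cadd0 caddN.

Lemma caddE' (x y : corner) : val (x + y) = val x + val y.
Proof. exact: caddE. Qed.

Lemma cvalM (x y : corner) : e * (val x * val y) * e = val x * val y.
Proof.
by rewrite -(cval_id x) -(cval_id y) !mulrA he -!mulrA he !mulrA.
Qed.

Lemma cmulE (x y : corner) : val (cmul x y) = val x * val y.
Proof. exact: cvalM. Qed.

Lemma cmulA : associative cmul.
Proof. by move=> x y z; apply: val_inj; rewrite !cmulE mulrA. Qed.
Lemma coneE : val cone = e.
Proof. by rewrite cval_proj mulr1 he. Qed.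
Lemma cmul1 : left_id cone cmul.
Proof.
move=> x; apply: val_inj; rewrite cmulE coneE.
by rewrite -[in LHS](cval_id x) !mulrA he cval_id.
Qed.
Lemma cmulr1 : right_id cone cmul.
Proof.
move=> x; apply: val_inj; rewrite cmulE coneE.
by rewrite -[in LHS](cval_id x) -!mulrA he !mulrA cval_id.
Qed.
Lemma cmulDl : left_distributive cmul (@GRing.add corner).
Proof.
move=> x y z; apply: val_inj.
by rewrite cmulE !caddE' !cmulE mulrDl.
Qed.
Lemma cmulDr : right_distributive cmul (@GRing.add corner).
Proof.
move=> x y z; apply: val_inj.
by rewrite cmulE !caddE' !cmulE mulrDr.
Qed.

HB.instance Definition _ :=
  GRing.Zmodule_isPzRing.Build corner cmulA cmul1 cmulr1 cmulDl cmulDr.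

Lemma corner_oneE : val (1 : corner) = e.
Proof. exact: coneE. Qed.
Lemma corner_mulE (x y : corner) : val (x * y) = val x * val y.
Proof. exact: cmulE. Qed.
Lemma corner_addE (x y : corner) : val (x + y) = val x + val y.
Proof. exact: caddE'. Qed.
End Corner.

(* A direct summand of S_S is fS for an idempotent f, so SSP says that fS + gS = hS
   for some idempotent h whenever f and g are idempotent.  For idempotents f, g of eRe,
   take h with fR + gR = hR in R; then eh = h, and he is an idempotent of eRe with
   (he)eRe = feRe + geRe.  The left-hand statement is the right-hand one for the
   converse ring, since the converse of eRe is isomorphic to the corner of R^c at e. *)

From Stdlib Require Import Setoid.
From mathcomp Require Import all_boot all_algebra.
Set Implicit Arguments.
Unset Strict Implicit.
Unset Printing Implicit Defensive.

Local Open Scope ring_scope.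
Import GRing.Theory.

Section Summands.
Variable S : pzRingType.

Definition idem_image (f : S) : S -> Prop := fun z => f * z = z.

Definition idem_SSP : Prop :=
  forall f g : S, f * f = f -> g * g = g ->
  exists2 h : S, h * h = h &
    forall z, idem_image h z <-> sum_sub (idem_image f) (idem_image g) z.

Lemma right_summand_idem (A : S -> Prop) : right_summand A ->
  exists2 f : S, f * f = f & forall z, A z <-> idem_image f z.
Proof.
case=> [[A0 AD AM] [C [[C0 CD CM] AC_full AC_disj]]].
have [f [g [Af Cg one_fg]]] := AC_full 1.
(* for a in A, ga = a - fa lies in both A and C, hence vanishes *)
have f_id a : A a -> f * a = a.
  move=> Aa; have a_fg : a = f * a + g * a by rewrite -mulrDl -one_fg mul1r.
  have Aga : A (g * a).
    have -> : g * a = a + f * a * -1 by rewrite mulrN1 {2}a_fg addrC addKr.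
    by apply: AD => //; apply: (AM); apply: (AM).
  by rewrite {2}a_fg (AC_disj _ Aga (CM _ _ Cg)) addr0.
exists f; first exact: f_id.
by move=> z; split; [exact: f_id | move=> <-; apply: AM].
Qed.

Lemma idem_image_summand (f : S) : f * f = f -> right_summand (idem_image f).
Proof.
move=> ff; split.
  split; rewrite /idem_image ?mulr0 //.
  - by move=> x y fx fy; rewrite mulrDr fx fy.
  - by move=> x s fx; rewrite mulrA fx.
exists (fun z => f * z = 0); split.
- split; rewrite ?mulr0 //.
  + by move=> x y fx fy; rewrite mulrDr fx fy addr0.
  + by move=> x s fx; rewrite mulrA fx mul0r.
- move=> z; exists (f * z), (z - f * z); split.
  + by rewrite /idem_image mulrA ff.
  + by rewrite mulrBr mulrA ff subrr.
  + by rewrite addrC subrK.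
- by move=> z fz <-.
Qed.

Lemma right_summand_eq (A B : S -> Prop) : (forall z, A z <-> B z) ->
  right_summand A -> right_summand B.
Proof.
move=> AB [[A0 AD AM] [C [HC AC_full AC_disj]]]; split.
  split; first exact/AB.
  - by move=> x y /AB Ax /AB Ay; apply/AB/AD.
  - by move=> x s /AB Ax; apply/AB/AM.
exists C; split => //.
- move=> z; have [a [b [Aa Cb ->]]] := AC_full z.
  by exists a, b; split => //; apply/AB.
- by move=> z /AB; apply: AC_disj.
Qed.

Lemma right_SSP_idemP : right_SSP S <-> idem_SSP.
Proof.
split=> [SSP_S f g ff gg | idem_S A B].
  have /right_summand_idem[h hh Eh] :=
    SSP_S _ _ (idem_image_summand ff) (idem_image_summand gg).
  by exists h => // z; apply: iff_sym.
move=> /right_summand_idem[f ff Ef] /right_summand_idem[g gg Eg].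
have [h hh Eh] := idem_S f g ff gg.
apply: right_summand_eq (idem_image_summand hh) => z.
rewrite Eh; split=> -[a [b [Aa Bb ->]]]; exists a, b.
  by split => //; [apply/Ef | apply/Eg].
by split => //; [apply/Ef | apply/Eg].
Qed.

Lemma left_SSP_converse : left_SSP S <-> right_SSP S^c.
Proof. by []. Qed.

End Summands.

Section Isomorphism.
Variables (S T : pzRingType) (phi : S -> T) (psi : T -> S).
Hypotheses (phiK : cancel phi psi) (psiK : cancel psi phi).
Hypotheses (phiD : {morph phi : x y / x + y}) (phiM : {morph phi : x y / x * y}).

Lemma psiM : {morph psi : x y / x * y}.
Proof. by move=> x y; apply: (can_inj phiK); rewrite phiM !psiK. Qed.

Lemma idem_image_iso (f : S) z : idem_image f (psi z) <-> idem_image (phi f) z.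
Proof.
rewrite /idem_image; split=> fz.
  by rewrite -{1}[z]psiK -phiM fz psiK.
by rewrite -{1}[f]phiK -psiM fz.
Qed.

Lemma right_SSP_iso : right_SSP S -> right_SSP T.
Proof.
move=> /right_SSP_idemP idem_S; apply/right_SSP_idemP => f g ff gg.
have idem_psi x : x * x = x -> psi x * psi x = psi x by rewrite -psiM => ->.
have [h hh Eh] := idem_S _ _ (idem_psi f ff) (idem_psi g gg).
exists (phi h); first by rewrite -phiM hh.
move=> z; rewrite -idem_image_iso Eh.
split=> -[a [b [fa gb zab]]].
  exists (phi a), (phi b); split.
  - by rewrite -[f]psiK; apply/idem_image_iso; rewrite phiK.
  - by rewrite -[g]psiK; apply/idem_image_iso; rewrite phiK.
  - by rewrite -phiD -zab psiK.
exists (psi a), (psi b); split.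
- by apply/idem_image_iso; rewrite psiK.
- by apply/idem_image_iso; rewrite psiK.
- by apply: (can_inj phiK); rewrite phiD !psiK.
Qed.

End Isomorphism.

Section Corner.
Variables (R : pzRingType) (e : R) (he : e * e = e).

Lemma corner_mull (x : eRe he) : e * val x = val x.
Proof. by rewrite -(cval_id x) !mulrA he. Qed.

Lemma corner_idem (f : eRe he) : f * f = f -> val f * val f = val f.
Proof. by rewrite -corner_mulE => ->. Qed.

Lemma sum_sub_corner (f g z : eRe he) :
  sum_sub (idem_image f) (idem_image g) z <->
  sum_sub (idem_image (val f)) (idem_image (val g)) (val z).
Proof.
split=> [[a [b [fa gb ->]]] | [X [Y [fX gY zXY]]]].
  by exists (val a), (val b); rewrite corner_addE /idem_image -!corner_mulE fa gb.
have eX : e * X = X by rewrite -fX mulrA corner_mull.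
have eY : e * Y = Y by rewrite -gY mulrA corner_mull.
exists (cproj he X), (cproj he Y); split; try apply: val_inj.
- by rewrite corner_mulE !cval_proj eX mulrA fX.
- by rewrite corner_mulE !cval_proj eY mulrA gY.
- by rewrite corner_addE !cval_proj -mulrDl -mulrDr -zXY cval_id.
Qed.

Lemma right_SSP_corner : right_SSP R -> right_SSP (eRe he).
Proof.
move=> /right_SSP_idemP idem_R; apply/right_SSP_idemP => f g ff gg.
have [h hh Eh] := idem_R _ _ (corner_idem ff) (corner_idem gg).
have eh : e * h = h.
  have [X [Y [fX gY ->]]] := proj1 (Eh h) hh.
  by rewrite mulrDr -fX -gY !mulrA !corner_mull.
have val_k : val (cproj he h) = h * e by rewrite cval_proj eh.
exists (cproj he h).
  by apply: val_inj; rewrite corner_mulE val_k mulrA -(mulrA h) eh hh.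
move=> z; rewrite sum_sub_corner -Eh /idem_image.
have val_kz : val (cproj he h * z) = h * val z.
  by rewrite corner_mulE val_k -mulrA corner_mull.
by split=> kz; [rewrite -val_kz kz | apply: val_inj; rewrite val_kz].
Qed.

End Corner.

Section ConverseCorner.
Variables (R : pzRingType) (e : R) (he : e * e = e).

Definition corner_converse (x : (eRe he)^c) : @eRe R^c e he :=
  @cproj R^c e he (val x).

Definition converse_corner (y : @eRe R^c e he) : (eRe he)^c := cproj he (val y).

Lemma val_corner_converse x : val (corner_converse x) = val x.
Proof.
by rewrite cval_proj; change (e * (val x * e) = val x); rewrite mulrA cval_id.
Qed.

Lemma val_converse_corner y : val (converse_corner y) = val y.
Proof. by rewrite cval_proj -mulrA; apply: (cval_id y). Qed.

Lemma left_SSP_corner : left_SSP R -> left_SSP (eRe he).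
Proof.
move=> /left_SSP_converse/(@right_SSP_corner R^c e he).
apply: (@right_SSP_iso _ _ converse_corner corner_converse).
- by move=> y; apply: val_inj; rewrite val_corner_converse val_converse_corner.
- by move=> x; apply: val_inj; rewrite val_converse_corner val_corner_converse.
- move=> x y; apply: val_inj.
  by rewrite val_converse_corner !corner_addE !val_converse_corner.
- move=> x y; apply: val_inj.
  rewrite val_converse_corner [LHS]corner_mulE [RHS]corner_mulE.
  by rewrite !val_converse_corner.
Qed.

End ConverseCorner.

Theorem theorem2p11 (R : pzRingType) (e : R) (he : e * e = e) :
  SSP R -> SSP (eRe he).
Proof.
by case=> right_R left_R; split; [exact: right_SSP_corner | exact: left_SSP_corner].
Qed.
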